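(* Let $q\in\Bbbk^\times$. (1) The linear map $\phi:A(q)\to A(q^{-1})$ with $\phi(e_1)=e_1$, $\phi(e_2)=e_2$, $\phi(a)=c$, $\phi(b)=d$, $\phi(c)=a$, $\phi(d)=b$ extends to an isomorphism. (2) The linear map $\psi:A(q)\to A(q^{-1})$ with $\psi(e_1)=e_2$, $\psi(e_2)=e_1$, $\psi(a)=qb$, $\psi(b)=a$, $\psi(c)=d$, $\psi(d)=c$ extends to an isomorphism.
   Context: $\Bbbk$ is an algebraically closed field of characteristic zero. Paths are written left to right. Let $Q$ be the quiver with vertices $e_1,e_2$, arrows $a,c:e_1\to e_2$ and $b,d:e_2\to e_1$; $A(q)=\Bbbk Q/(ab-cd,\ ba-q\,dc)$. *)

From HB Require Import structures.
From mathcomp Require Import all_boot all_order all_algebra.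
Set Implicit Arguments. Unset Strict Implicit. Unset Printing Implicit Defensive.
Import GRing.Theory.
Local Open Scope ring_scope.

(* Generators of the path algebra of Q: vertices e1 e2, arrows
   a c : e1 -> e2 and b d : e2 -> e1.  Paths are written left to right,
   so the path "a then b" is the product a * b, and e1 * a = a = a * e2. *)
Record gens (K : fieldType) (R : algType K) := Gens {
  ge1 : R; ge2 : R; ga : R; gb : R; gc : R; gd : R }.

(* Defining relations of A(q) = kQ/(ab - cd, ba - q dc), presented by the
   standard presentation of the path algebra kQ (complete set of orthogonal
   idempotents e1, e2, and arrows a = e_{s(a)} a e_{t(a)}) plus the two
   relations. *)
Definition relA (K : fieldType) (R : algType K) (q : K) (g : gens R) : Prop :=
  [/\ ge1 g + ge2 g = 1,
      ge1 g * ge1 g = ge1 g /\ ge2 g * ge2 g = ge2 g,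
      ge1 g * ge2 g = 0 /\ ge2 g * ge1 g = 0,
      [/\ ga g = ge1 g * ga g * ge2 g, gb g = ge2 g * gb g * ge1 g,
          gc g = ge1 g * gc g * ge2 g & gd g = ge2 g * gd g * ge1 g]
    & ga g * gb g = gc g * gd g /\ gb g * ga g = q *: (gd g * gc g)].

Definition sends_gens (K : fieldType) (R S : algType K) (f : R -> S)
  (g : gens R) (h : gens S) : Prop :=
  [/\ f (ge1 g) = ge1 h, f (ge2 g) = ge2 h, f (ga g) = ga h,
      f (gb g) = gb h & f (gc g) = gc h /\ f (gd g) = gd h].

Definition presentsA (K : fieldType) (R : algType K) (q : K) (g : gens R) : Prop :=
  relA q g /\
  forall (S : algType K) (h : gens S), relA q h ->
    exists f : {lrmorphism R -> S},
      sends_gens f g h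
      /\ forall f' : {lrmorphism R -> S},
        sends_gens f' g h ->
        f' =1 f.

(* Both maps are relabellings of the generators that carry the relations of
   A(q) onto those of A(q^-1): swapping (a, b) with (c, d) exchanges the two
   sides of each relation, and the vertex flip turns ab = cd into ba = q^-1 dc
   once a is rescaled by q.  By the universal property each relabelling
   induces an algebra map, the inverse relabelling induces a map back, and
   both composites fix the generators, hence are the identity. *)
From HB Require Import structures.
From mathcomp Require Import all_boot all_order all_algebra.
Import GRing.Theory.
Local Open Scope ring_scope.

Set Implicit Arguments.
Unset Strict Implicit.

Section Relabellings.

Variables (K : fieldType) (R : algType K).

Definition gens_swap (g : gens R) : gens R :=
  Gens (ge1 g) (ge2 g) (gc g) (gd g) (ga g) (gb g).

Definition gens_flip (s t : K) (g : gens R) : gens R :=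
  Gens (ge2 g) (ge1 g) (s *: gb g) (t *: ga g) (gd g) (gc g).

Lemma relA_swap (p p' : K) (g : gens R) :
  p' * p = 1 -> relA p g -> relA p' (gens_swap g).
Proof.
move=> pp' [sum1 idem orth [Ea Eb Ec Ed] [Rab Rba]].
by split=> //; split=> //=; rewrite Rba scalerA pp' scale1r.
Qed.

Lemma relA_flip (p p' s t : K) (g : gens R) :
  p' * p = 1 -> s * t = p' -> relA p g -> relA p' (gens_flip s t g).
Proof.
move=> pp' st [sum1 [I1 I2] [O12 O21] [Ea Eb Ec Ed] [Rab Rba]].
split=> //=; first by rewrite addrC.
- by split=> //; rewrite -scalerAr -scalerAl -?Ea -?Eb.
split; rewrite -scalerAr -scalerAl scalerA.
- by rewrite Rba scalerA [t * s]mulrC st pp' scale1r.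
- by rewrite st Rab.
Qed.

End Relabellings.

Section Composites.

Variables (K : fieldType) (R S : algType K).
Variables (f : {lrmorphism R -> S}) (f' : {lrmorphism S -> R}).
Variables (g : gens R) (h : gens S).

Lemma sends_gens_swap_comp :
  sends_gens f g (gens_swap h) -> sends_gens f' h (gens_swap g) ->
  sends_gens (f' \o f) g g.
Proof.
move=> [F1 F2 Fa Fb [Fc Fd]] [F1' F2' Fa' Fb' [Fc' Fd']].
by split=> /=; rewrite ?F1 ?F2 ?Fa ?Fb ?Fc ?Fd.
Qed.

Lemma sends_gens_flip_comp (s t s' t' : K) :
  s * t' = 1 -> t * s' = 1 ->
  sends_gens f g (gens_flip s t h) -> sends_gens f' h (gens_flip s' t' g) ->
  sends_gens (f' \o f) g g.
Proof.
move=> st' ts' [F1 F2 Fa Fb [Fc Fd]] [F1' F2' Fa' Fb' [Fc' Fd']].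
split=> /=; rewrite ?F1 ?F2 ?Fc ?Fd //.
- by rewrite Fa linearZ /= Fb' scalerA st' scale1r.
- by rewrite Fb linearZ /= Fa' scalerA ts' scale1r.
Qed.

End Composites.

Lemma presentsA_endo_id (K : fieldType) (R : algType K) (p : K) (g : gens R)
    (f : {lrmorphism R -> R}) :
  presentsA p g -> sends_gens f g g -> f =1 id.
Proof.
move=> [relg univ] fg x.
have [f0 [_ f0_unique]] := univ R g relg.
have id_g : sends_gens (idfun : {lrmorphism R -> R}) g g by [].
by rewrite (f0_unique _ fg x) -(f0_unique _ id_g x).
Qed.

Lemma presentsA_iso (K : fieldType) (R S : algType K) (p p' : K)
    (g : gens R) (h : gens S) (h' : gens S) (g' : gens R) :
  presentsA p g -> presentsA p' h -> relA p h' -> relA p' g' ->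
  (forall (f : {lrmorphism R -> S}) (f' : {lrmorphism S -> R}),
     sends_gens f g h' -> sends_gens f' h g' ->
     sends_gens (f' \o f) g g /\ sends_gens (f \o f') h h) ->
  exists f : {lrmorphism R -> S}, bijective f /\ sends_gens f g h'.
Proof.
move=> presg presh relh' relg' comp_id.
have [f [fg _]] := presg.2 S h' relh'.
have [f' [f'h _]] := presh.2 R g' relg'.
have [f'f ff'] := comp_id f f' fg f'h.
exists f; split=> //; exists f'.
- exact: presentsA_endo_id presg f'f.
- exact: presentsA_endo_id presh ff'.
Qed.

Theorem lemma3p5 (K : closedFieldType) (charK0 : [pchar K] =i pred0)
  (q : K) (hq : q != 0)
  (Aq : algType K) (g : gens Aq) (HAq : presentsA q g)
  (Aqi : algType K) (h : gens Aqi) (HAqi : presentsA q^-1 h) :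
  (exists phi : {lrmorphism Aq -> Aqi}, bijective phi /\
     [/\ phi (ge1 g) = ge1 h, phi (ge2 g) = ge2 h, phi (ga g) = gc h,
         phi (gb g) = gd h & phi (gc g) = ga h /\ phi (gd g) = gb h])
  /\
  (exists psi : {lrmorphism Aq -> Aqi}, bijective psi /\
     [/\ psi (ge1 g) = ge2 h, psi (ge2 g) = ge1 h, psi (ga g) = q *: gb h,
         psi (gb g) = ga h & psi (gc g) = gd h /\ psi (gd g) = gc h]).
Proof.
have qVq : q^-1 * q = 1 by rewrite mulVf.
have qqV : q * q^-1 = 1 by rewrite mulfV.
split.
- apply: (presentsA_iso HAq HAqi (relA_swap qqV HAqi.1) (relA_swap qVq HAq.1)).
  move=> f f' fh f'g.
  by split; [exact: sends_gens_swap_comp fh f'g | exact: sends_gens_swap_comp f'g fh].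
- have [psi [bij_psi [E1 E2 Ea Eb [Ec Ed]]]] :=
    presentsA_iso HAq HAqi (relA_flip qqV (mulr1 q) HAqi.1)
      (relA_flip qVq (mul1r q^-1) HAq.1)
      (fun f f' fh f'g => conj (sends_gens_flip_comp qqV (mulr1 1) fh f'g)
                               (sends_gens_flip_comp (mulr1 1) qVq f'g fh)).
  by exists psi; rewrite /= scale1r in Eb.
Qed.
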